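(* Let $R$ be a ring (associative with identity), let $m,n\geq 1$ and $k\geq 2$ be integers. If the matrix rings $M_n(R)$ and $M_m(R)$ are both $k$-clean, then so is $M_{n+m}(R)$.
   Context: For a positive integer $k$, a ring $S$ is $k$-clean if every element of $S$ can be written as $e+u_1+\cdots+u_k$ with $e=e^2\in S$ and $u_1,\dots,u_k$ units of $S$. *)

From mathcomp Require Import all_boot all_algebra.
Set Implicit Arguments. Unset Strict Implicit. Unset Printing Implicit Defensive.
Import GRing.Theory.
Local Open Scope ring_scope.

(* u is a unit of the (possibly noncommutative) ring S: it has a two-sided
   inverse.  (MathComp only equips square matrices over a *commutative* unit
   ring with a unitRingType structure, so we use the plain definition.) *)
Definition is_unit (S : nzRingType) (u : S) : Prop :=
  exists v : S, u * v = 1 /\ v * u = 1.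

Definition k_clean (S : nzRingType) (k : nat) : Prop :=
  forall x : S, exists (e : S) (u : 'I_k -> S),
    e * e = e /\ (forall i, is_unit (u i)) /\ x = e + \sum_(i < k) u i.

From mathcomp Require Import all_boot all_algebra.
Set Implicit Arguments. Unset Strict Implicit. Unset Printing Implicit Defensive.
Import GRing.Theory.
Local Open Scope ring_scope.

(* Write x in M_(p+q)(R) as [[a, b], [c, d]]. Decompose a = f + u_1 + ... + u_k
   in M_p(R) and the Schur complement d - c u_1^-1 b = g + w_1 + ... + w_k in
   M_q(R). Then x = diag(f, g) + [[u_1, b], [c, w_1 + c u_1^-1 b]]
   + sum_(i > 1) diag(u_i, w_i), and the first unit is invertible because it
   factors as [[1, 0], [c u_1^-1, 1]] diag(u_1, w_1) [[1, u_1^-1 b], [0, 1]].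
   The argument only needs k >= 1. *)

(* Stated with [*m] so that it makes sense for every size [p], such as [p + q],
   where ['M_p] carries no canonical nonzero-ring structure. *)
Definition mx_unit (R : pzRingType) (p : nat) (A : 'M[R]_p) : Prop :=
  exists B : 'M[R]_p, A *m B = 1%:M /\ B *m A = 1%:M.

Definition mx_k_clean (R : pzRingType) (p k : nat) : Prop :=
  forall x : 'M[R]_p, exists (e : 'M[R]_p) (u : 'I_k -> 'M[R]_p),
    e *m e = e /\ (forall i, mx_unit (u i)) /\ x = e + \sum_(i < k) u i.

Lemma k_clean_mxE (R : nzRingType) (n k : nat) :
  k_clean [the nzRingType of 'M[R]_n.+1] k = mx_k_clean R n.+1 k.
Proof. by []. Qed.

Lemma mx_unitM (R : pzRingType) (p : nat) (A B : 'M[R]_p) :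
  mx_unit A -> mx_unit B -> mx_unit (A *m B).
Proof.
move=> [A' [AA' A'A]] [B' [BB' B'B]]; exists (B' *m A'); split.
  by rewrite mulmxA -(mulmxA A) BB' mulmx1 AA'.
by rewrite mulmxA -(mulmxA B') A'A mulmx1 B'B.
Qed.

Lemma sum_block_mx (R : pzRingType) (p1 p2 q1 q2 k : nat)
    (F1 : 'I_k -> 'M[R]_(p1, q1)) (F2 : 'I_k -> 'M[R]_(p1, q2))
    (F3 : 'I_k -> 'M[R]_(p2, q1)) (F4 : 'I_k -> 'M[R]_(p2, q2)) :
  \sum_(i < k) block_mx (F1 i) (F2 i) (F3 i) (F4 i) =
  block_mx (\sum_i F1 i) (\sum_i F2 i) (\sum_i F3 i) (\sum_i F4 i).
Proof.
elim: k F1 F2 F3 F4 => [|k IHk] F1 F2 F3 F4; first by rewrite !big_ord0 block_mx0.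
by rewrite !big_ord_recr /= IHk add_block_mx.
Qed.

Section BlockUnits.

Variables (R : pzRingType) (p q : nat).

Lemma mx_unit_block_diag (A : 'M[R]_p) (D : 'M[R]_q) :
  mx_unit A -> mx_unit D -> mx_unit (block_mx A 0 0 D).
Proof.
move=> [A' [AA' A'A]] [D' [DD' D'D]]; exists (block_mx A' 0 0 D').
rewrite !mulmx_block !mulmx0 !mul0mx !addr0 !add0r.
by rewrite AA' A'A DD' D'D -scalar_mx_block.
Qed.

Lemma mx_unit_block_lower (C : 'M[R]_(q, p)) :
  mx_unit (block_mx 1%:M 0 C 1%:M).
Proof.
exists (block_mx 1%:M 0 (- C) 1%:M).
rewrite !mulmx_block !mulmx0 !mul0mx !mulmx1 !mul1mx !addr0 !add0r.
by rewrite addrN addNr -scalar_mx_block.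
Qed.

Lemma mx_unit_block_upper (B : 'M[R]_(p, q)) :
  mx_unit (block_mx 1%:M B 0 1%:M).
Proof.
exists (block_mx 1%:M (- B) 0 1%:M).
rewrite !mulmx_block !mulmx0 !mul0mx !mulmx1 !mul1mx !addr0 !add0r.
by rewrite addrN addNr -scalar_mx_block.
Qed.

Lemma mx_unit_block_schur (A A' : 'M[R]_p) (B : 'M[R]_(p, q))
    (C : 'M[R]_(q, p)) (S : 'M[R]_q) :
  A *m A' = 1%:M -> A' *m A = 1%:M -> mx_unit S ->
  mx_unit (block_mx A B C (S + C *m A' *m B)).
Proof.
move=> AA' A'A unit_S.
have -> : block_mx A B C (S + C *m A' *m B) =
    block_mx 1%:M 0 (C *m A') 1%:M *m block_mx A 0 0 S
      *m block_mx 1%:M (A' *m B) 0 1%:M.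
  rewrite !mulmx_block !mulmx0 !mul0mx !mulmx1 !mul1mx !addr0 !add0r.
  by rewrite (mulmxA A) AA' mul1mx -(mulmxA C A' A) A'A mulmx1 mulmxA addrC.
apply: mx_unitM; last exact: mx_unit_block_upper.
apply: mx_unitM; first exact: mx_unit_block_lower.
by apply: mx_unit_block_diag => //; exists A'.
Qed.

Lemma mx_k_clean_block (k : nat) :
  mx_k_clean R p k.+1 -> mx_k_clean R q k.+1 -> mx_k_clean R (p + q) k.+1.
Proof.
move=> clean_p clean_q x; rewrite -[x]submxK.
set a := ulsubmx x; set b := ursubmx x; set c := dlsubmx x; set d := drsubmx x.
have [f [u [idem_f [unit_u def_a]]]] := clean_p a.
have [u0' [u0K u0K']] := unit_u ord0.
have [g [w [idem_g [unit_w def_schur]]]] := clean_q (d - c *m u0' *m b).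
pose N := block_mx 0 b c (c *m u0' *m b).
exists (block_mx f 0 0 g),
  (fun i => block_mx (u i) 0 0 (w i) + (if i == ord0 then N else 0)).
split; [|split].
- by rewrite mulmx_block !mulmx0 !mul0mx !addr0 !add0r idem_f idem_g.
- move=> i; case: eqP => [->|_]; last by rewrite addr0; apply: mx_unit_block_diag.
  by rewrite add_block_mx !addr0 !add0r; apply: mx_unit_block_schur.
- rewrite big_split /= -big_mkcond big_pred1_eq sum_block_mx !big1_eq.
  by rewrite !add_block_mx !add0r !addr0 -def_a addrA -def_schur subrK.
Qed.

End BlockUnits.

(* matrix sizes n.+1, m.+1 encode n, m >= 1; (n + m).+2 = n.+1 + m.+1 *)
Theorem lemma5 (R : nzRingType) (n m k : nat) (hk : (2 <= k)%N) :
  k_clean [the nzRingType of 'M[R]_n.+1] k ->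
  k_clean [the nzRingType of 'M[R]_m.+1] k ->
  k_clean [the nzRingType of 'M[R]_((n + m).+2)] k.
Proof.
case: k hk => // k _; rewrite !k_clean_mxE => clean_n clean_m.
by have := mx_k_clean_block clean_n clean_m; rewrite addnS addSn.
Qed.
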